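(* Let $\mathcal{O}$ be the observation space consisting of all real $2\times n$ matrices ($n\ge 1$ arbitrary) whose columns are unit vectors in $\mathbb{R}^2$, and let $\mathcal{A}=\{(\hat u,\sigma): \hat u\in\mathbb{R}^2,\ \|\hat u\|=1,\ 0\le\sigma\le 1\}$ be the action space. For $\theta\in\mathbb{R}$ let $R(\theta)\in SO(2)$ denote rotation by angle $\theta$, and let a rotation $R\in SO(2)$ act on $O\in\mathcal{O}$ by $O\mapsto RO$ (rotating every column) and on an action $a=(\hat u,\sigma)\in\mathcal{A}$ by $Ra:=(R\hat u,\sigma)$. For $O\in\mathcal{O}$ with $n$ columns such that $O\mathbf{1}_n\neq 0$ (where $\mathbf{1}_n$ is the all-ones vector of length $n$), define $\bar u(O)=\frac{O\mathbf{1}_n}{\|O\mathbf{1}_n\|}$ and let $\theta^*(O)$ be the angle of $\bar u(O)$ measured from the $x$-axis, i.e. the angle with $\bar u(O)=(\cos\theta^*(O),\sin\theta^*(O))^T$ (determined modulo $2\pi$). Define $$T_{\mathrm{pre}}(O)=R(\theta^*(O))^T O,\qquad T_{\mathrm{post}}^{O}(a)=R(\theta^*(O))\,a \quad (a\in\mathcal{A}).$$ Then for any function $m:\mathcal{O}\to\mathcal{A}$, the map $F(O):=T_{\mathrm{post}}^{O}\big(m(T_{\mathrm{pre}}(O))\big)$ is equivariant with respect to $SO(2)$: for every $R\in SO(2)$ and every $O\in\mathcal{O}$ with $O\mathbf{1}_n\neq 0$, one has $F(RO)=R\,F(O)$.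
   Context: In the paper, an observation of an agent is the collection of unit vectors (bearings) pointing from the agent to each of its visible neighbours, written as a $2\times n$ matrix whose columns are these unit vectors. An action is a movement direction (unit vector) together with a step size in $[0,1]$. A function $m$ from observations to actions is called equivariant with respect to rotations if $m(RO)=R\,m(O)$ for all observations $O$ and all $R\in SO(2)$, where rotations act on actions by rotating the direction component only. *)

From mathcomp Require Import all_boot all_order all_algebra.
From mathcomp Require Import all_classical all_reals.
From mathcomp Require Import trigo.
Set Implicit Arguments. Unset Strict Implicit. Unset Printing Implicit Defensive.
Import Order.TTheory GRing.Theory Num.Theory.
Local Open Scope ring_scope.

Section Defs.
Variable R : realType.

Definition vnorm (v : 'cV[R]_2) : R := Num.sqrt (\sum_(i < 2) v i 0 ^+ 2).

Definition is_obs (n : nat) (O : 'M[R]_(2, n)) : Prop :=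
  (0 < n)%N /\ forall j : 'I_n, vnorm (col j O) = 1.

Definition action := ('cV[R]_2 * R)%type.
Definition is_action (a : action) : Prop :=
  vnorm a.1 = 1 /\ 0 <= a.2 <= 1.

Definition is_SO2 (Q : 'M[R]_2) : Prop := Q^T *m Q = 1%:M /\ \det Q = 1.

Definition rot (t : R) : 'M[R]_2 :=
  \matrix_(i < 2, j < 2)
    (if i == j then cos t else if (i == 0) then - sin t else sin t).

Definition act_rot (Q : 'M[R]_2) (a : action) : action := (Q *m a.1, a.2).

Definition colsum n (O : 'M[R]_(2, n)) : 'cV[R]_2 := O *m const_mx 1.

Definition ubar n (O : 'M[R]_(2, n)) : 'cV[R]_2 := (vnorm (colsum O))^-1 *: colsum O.

Definition theta_star n (O : 'M[R]_(2, n)) : R :=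
  xget 0 [set t : R | cos t = ubar O 0 0 /\ sin t = ubar O 1 0].

Definition T_pre n (O : 'M[R]_(2, n)) : 'M[R]_(2, n) := (rot (theta_star O))^T *m O.
Definition T_post n (O : 'M[R]_(2, n)) (a : action) : action := act_rot (rot (theta_star O)) a.

Definition F_eqv (m : forall n, 'M[R]_(2, n) -> action) n (O : 'M[R]_(2, n)) : action :=
  T_post O (m n (T_pre O)).

End Defs.

(** An observation [O] and its rotation [Q O] have mean bearings [ubar O] and
    [Q (ubar O)].  A rotation in SO(2) is determined by its first column, and
    the first column of [rot (theta_star O)] is [ubar O]; hence
    [rot (theta_star (Q O)) = Q rot (theta_star O)].  So canonicalisation
    cancels [Q] ([T_pre (Q O) = T_pre O]) and the post-rotation picks it up
    again. *)

From mathcomp Require Import all_boot all_order all_algebra.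
From mathcomp Require Import all_classical all_reals.
From mathcomp Require Import trigo.
From mathcomp Require Import ring.
Import Order.TTheory GRing.Theory Num.Theory.
Local Open Scope ring_scope.

Section Equivariance.
Variable R : realType.
Implicit Types (v w : 'cV[R]_2) (P Q : 'M[R]_2).

Lemma ord2_ind (X : 'I_2 -> Prop) : X 0 -> X 1 -> forall i, X i.
Proof. by move=> X0 X1 [[|[|i]] lti] //; [move: X0 | move: X1]; congr X; apply: val_inj. Qed.

Lemma cV2P v w : v 0 0 = w 0 0 -> v 1 0 = w 1 0 -> v = w.
Proof. by move=> e0 e1; apply/matrixP=> + j; rewrite (ord1 j); apply: ord2_ind. Qed.

Lemma mx22P P Q : P 0 0 = Q 0 0 -> P 0 1 = Q 0 1 -> P 1 0 = Q 1 0 -> P 1 1 = Q 1 1 ->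
  P = Q.
Proof. by move=> e00 e01 e10 e11; apply/matrixP; apply: ord2_ind; apply: ord2_ind. Qed.

Lemma sum_ord2 (F : 'I_2 -> R) : \sum_(i < 2) F i = F 0 + F 1.
Proof. by rewrite !big_ord_recr big_ord0 /= add0r; congr (F _ + F _); apply: val_inj. Qed.

Lemma det_mx22 Q : \det Q = Q 0 0 * Q 1 1 - Q 0 1 * Q 1 0.
Proof.
rewrite (expand_det_row _ 0) sum_ord2 /cofactor !det_mx11 !mxE.
have -> : lift (0 : 'I_2) (0 : 'I_1) = 1 by apply: val_inj.
have -> : lift (1 : 'I_2) (0 : 'I_1) = 0 by apply: val_inj.
by rewrite /= expr0 expr1; ring.
Qed.

Lemma col_mul m n p (j : 'I_p) (A : 'M[R]_(m, n)) (B : 'M[R]_(n, p)) :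
  col j (A *m B) = A *m col j B.
Proof. by rewrite !colE mulmxA. Qed.

Lemma vnormE v : vnorm v = Num.sqrt (v 0 0 ^+ 2 + v 1 0 ^+ 2).
Proof. by rewrite /vnorm sum_ord2. Qed.

Lemma vnorm_trmx_mul v : vnorm v = Num.sqrt ((v^T *m v) 0 0).
Proof. by rewrite /vnorm mxE; congr Num.sqrt; apply: eq_bigr => i _; rewrite mxE. Qed.

Lemma vnorm_orthogonal_mul Q v : Q^T *m Q = 1%:M -> vnorm (Q *m v) = vnorm v.
Proof.
by move=> hQ; rewrite !vnorm_trmx_mul trmx_mul mulmxA -(mulmxA v^T) hQ mulmx1.
Qed.

Lemma vnormZ (c : R) v : vnorm (c *: v) = `|c| * vnorm v.
Proof.
by rewrite !vnormE !mxE !exprMn -mulrDr sqrtrM ?sqr_ge0 // sqrtr_sqr.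
Qed.

Lemma vnorm_eq0 v : (vnorm v == 0) = (v == 0).
Proof.
rewrite vnormE sqrtr_eq0 le_eqVlt ltNge addr_ge0 ?sqr_ge0 // orbF.
rewrite paddr_eq0 ?sqr_ge0 // !sqrf_eq0.
apply/andP/eqP => [[/eqP v0 /eqP v1] | ->]; last by rewrite !mxE.
by apply: cV2P; rewrite mxE.
Qed.

Lemma exists_cos_sin (x y : R) : x ^+ 2 + y ^+ 2 = 1 ->
  exists t : R, cos t = x /\ sin t = y.
Proof.
move=> h.
have hx : -1 <= x <= 1.
  by rewrite -ler_norml -sqrtr_sqr -sqrtr1 ler_sqrt // -h lerDl sqr_ge0.
have hs : Num.sqrt (1 - x ^+ 2) = `|y| by rewrite -h addrAC subrr add0r sqrtr_sqr.
have cos_acos : cos (acos x) = x by rewrite acosK // in_itv /= hx.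
case: (lerP 0 y) => hy.
  by exists (acos x); rewrite cos_acos sin_acos // hs ger0_norm.
by exists (- acos x); rewrite cosN sinN cos_acos sin_acos // hs ltr0_norm // opprK.
Qed.

Lemma unit_col0_rot v : vnorm v = 1 -> exists t, col 0 (rot t) = v.
Proof.
move=> v1; have [|t [ct st]] := @exists_cos_sin (v 0 0) (v 1 0).
  by rewrite -[LHS]sqr_sqrtr ?addr_ge0 ?sqr_ge0 // -vnormE v1 expr1n.
by exists t; apply: cV2P; rewrite !mxE.
Qed.

Lemma rot_SO2 (t : R) : is_SO2 (rot t).
Proof.
split; last by rewrite det_mx22 !mxE /= -(cos2Dsin2 t); ring.
by apply: mx22P; rewrite !mxE sum_ord2 !mxE /= ?(@mulr1n R) -?(cos2Dsin2 t); ring.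
Qed.

Lemma SO2_mul P Q : is_SO2 P -> is_SO2 Q -> is_SO2 (P *m Q).
Proof.
move=> [PP dP] [QQ dQ]; split; last by rewrite det_mulmx dP dQ mulr1.
by rewrite trmx_mul mulmxA -(mulmxA Q^T) PP mulmx1 QQ.
Qed.

Lemma SO2_shape Q : is_SO2 Q -> Q 1 1 = Q 0 0 /\ Q 0 1 = - Q 1 0.
Proof.
move=> [QQ dQ]; have entry i j := congr1 (fun M : 'M[R]_2 => M i j) QQ.
move: (entry 0 0) (entry 1 1) dQ; rewrite !mxE !sum_ord2 !mxE det_mx22 /=.
set a := Q 0 0; set b := Q 1 0; set c := Q 0 1; set d := Q 1 1 => ab cd ad_cb.
have : (d - a) ^+ 2 + (c + b) ^+ 2 = 0.
  transitivity ((a * a + b * b) + (c * c + d * d) - 2 * (a * d - c * b)); first ring.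
  by rewrite ab cd ad_cb; ring.
move/eqP; rewrite paddr_eq0 ?sqr_ge0 // !sqrf_eq0 subr_eq0 addr_eq0.
by case/andP=> /eqP -> /eqP ->.
Qed.

Lemma SO2_eq_col0 P Q : is_SO2 P -> is_SO2 Q -> col 0 P = col 0 Q -> P = Q.
Proof.
move=> /SO2_shape [P11 P01] /SO2_shape [Q11 Q01] PQ.
have e0 : P 0 0 = Q 0 0 by move: (congr1 (fun v => v 0 0) PQ); rewrite !mxE.
have e1 : P 1 0 = Q 1 0 by move: (congr1 (fun v => v 1 0) PQ); rewrite !mxE.
by apply: mx22P; rewrite ?P11 ?Q11 ?P01 ?Q01 ?e0 ?e1.
Qed.

Lemma colsum_mul n Q (O : 'M[R]_(2, n)) : colsum (Q *m O) = Q *m colsum O.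
Proof. by rewrite /colsum mulmxA. Qed.

Lemma ubar_orthogonal_mul n Q (O : 'M[R]_(2, n)) :
  Q^T *m Q = 1%:M -> ubar (Q *m O) = Q *m ubar O.
Proof. by move=> hQ; rewrite /ubar colsum_mul vnorm_orthogonal_mul // scalemxAr. Qed.

Lemma vnorm_ubar n (O : 'M[R]_(2, n)) : colsum O != 0 -> vnorm (ubar O) = 1.
Proof.
rewrite -vnorm_eq0 /ubar vnormZ => ns0.
by rewrite ger0_norm ?invr_ge0 ?sqrtr_ge0 // mulVf.
Qed.

Lemma col0_rot_theta_star n (O : 'M[R]_(2, n)) :
  colsum O != 0 -> col 0 (rot (theta_star O)) = ubar O.
Proof.
move=> /vnorm_ubar /unit_col0_rot [t ut].
have : exists t, cos t = ubar O 0 0 /\ sin t = ubar O 1 0 by exists t; rewrite -ut !mxE.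
move=> /(xgetPex 0) [ct st].
by apply: cV2P; rewrite [LHS]mxE [LHS]mxE /=; [exact: ct | exact: st].
Qed.

Lemma rot_theta_star_SO2_mul n Q (O : 'M[R]_(2, n)) : is_SO2 Q -> colsum O != 0 ->
  rot (theta_star (Q *m O)) = Q *m rot (theta_star O).
Proof.
move=> hQ s0; have QO0 : colsum (Q *m O) != 0.
  by rewrite -vnorm_eq0 colsum_mul vnorm_orthogonal_mul ?vnorm_eq0 //; case: hQ.
apply: SO2_eq_col0; [exact: rot_SO2 | apply: SO2_mul => //; exact: rot_SO2 |].
by rewrite col_mul !col0_rot_theta_star // ubar_orthogonal_mul //; case: hQ.
Qed.

Lemma T_pre_SO2_mul n Q (O : 'M[R]_(2, n)) : is_SO2 Q -> colsum O != 0 ->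
  T_pre (Q *m O) = T_pre O.
Proof.
move=> hQ s0; have [QQ _] := hQ.
by rewrite /T_pre rot_theta_star_SO2_mul // trmx_mul -mulmxA (mulmxA Q^T) QQ mul1mx.
Qed.

Lemma T_post_SO2_mul n Q (O : 'M[R]_(2, n)) (a : action R) :
  is_SO2 Q -> colsum O != 0 -> T_post (Q *m O) a = act_rot Q (T_post O a).
Proof. by move=> hQ s0; rewrite /T_post /act_rot rot_theta_star_SO2_mul // mulmxA. Qed.

End Equivariance.

Theorem lemma1 (R : realType) (m : forall n, 'M[R]_(2, n) -> action R)
  (hm : forall n (O : 'M[R]_(2, n)), is_obs O -> is_action (m n O))
  (Q : 'M[R]_2) (hQ : is_SO2 Q)
  (n : nat) (O : 'M[R]_(2, n)) (hO : is_obs O) (hsum : colsum O != 0) :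
  F_eqv m (Q *m O) = act_rot Q (F_eqv m O).
Proof. by rewrite /F_eqv T_pre_SO2_mul // T_post_SO2_mul. Qed.
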